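(* For each integer $d\geq 1$ there is a constant $b_d>1$ such that the following holds. Let $G$ be a graph without isolated vertices and of maximum degree at most $d$, and let $U\subseteq V(G)$. Then $|\varphi(G)\leftarrow U|\leq |\varphi(G)|/2^{|U|/b_d}$.
   Context: For a graph $G$ without isolated vertices, $\varphi(G)$ is the CNF whose variables are the vertices of $G$ and whose clauses are $(u\vee v)$ for all edges $\{u,v\}\in E(G)$. Boolean functions are identified with their sets of satisfying assignments (sets of literals, one per variable), and $|\cdot|$ denotes the number of satisfying assignments. For $U\subseteq V(G)$, $\varphi(G)\leftarrow U$ denotes the set of satisfying assignments of $\varphi(G)$ that assign every variable of $U$ the value true. *)

From mathcomp Require Import all_boot.
From Stdlib Require Import Reals.
Set Implicit Arguments. Unset Strict Implicit. Unset Printing Implicit Defensive.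

Definition simple_graph (T : finType) (e : rel T) : Prop :=
  symmetric e /\ irreflexive e.

Definition no_isolated (T : finType) (e : rel T) : Prop :=
  forall u : T, exists v : T, e u v.

Definition max_degree_le (T : finType) (e : rel T) (d : nat) : Prop :=
  forall u : T, #|[set v | e u v]| <= d.

(* An assignment (true/false to each vertex) satisfies phi(G) iff every
   edge clause (u \/ v) is satisfied. *)
Definition sat_phi (T : finType) (e : rel T) (f : {ffun T -> bool}) : bool :=
  [forall u, forall v, e u v ==> (f u || f v)].

Definition count_phi (T : finType) (e : rel T) : nat :=
  #|[set f : {ffun T -> bool} | sat_phi e f]|.

Definition count_phi_set (T : finType) (e : rel T) (U : {set T}) : nat :=
  #|[set f : {ffun T -> bool} | sat_phi e f && [forall u in U, f u]]|.

(* Fix w in U and release w: make it false and its neighbours true.  This maps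
   phi(G) <- U into the assignments of phi(G) <- (U \ w) that are false at w,
   at most 2^d to one, and these are disjoint from phi(G) <- U.  Hence
   |phi(G) <- (U \ w)| >= (1 + 2^-d) |phi(G) <- U|, and iterating over U gives
   the claim with b_d = ln 2 / ln (1 + 2^-d).  Isolated vertices do no harm. *)

From mathcomp Require Import all_boot.
From Stdlib Require Import Reals Lra.
(* Reals rebinds [^] on nat to [Nat.pow]; restore [expn]. *)
Import ssrnat.

Set Implicit Arguments.
Unset Strict Implicit.
Unset Printing Implicit Defensive.

Section ForcedAssignments.
Variables (T : finType) (e : rel T).

Definition forced_sat (U : {set T}) : {set {ffun T -> bool}} :=
  [set f | sat_phi e f && [forall u in U, f u]].

Lemma in_forced_sat (U : {set T}) f :
  (f \in forced_sat U) = sat_phi e f && [forall u in U, f u].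
Proof. by rewrite inE. Qed.

Lemma forced_satS (U V : {set T}) :
  U \subset V -> forced_sat V \subset forced_sat U.
Proof.
move=> sUV; apply/subsetP => f.
rewrite !in_forced_sat => /andP[-> /forall_inP f_V].
by apply/forall_inP => u uU; apply: f_V (subsetP sUV u uU).
Qed.

Lemma card_forced_sat0 : #|forced_sat set0| = count_phi e.
Proof.
apply: eq_card => f; rewrite in_forced_sat inE.
by apply/andb_idr => _; apply/forall_inP => u; rewrite inE.
Qed.

Definition forced_sat_off (U : {set T}) (w : T) : {set {ffun T -> bool}} :=
  [set g in forced_sat (U :\ w) | ~~ g w].

Lemma card_forced_sat_add_off (U : {set T}) w : w \in U ->
  #|forced_sat U| + #|forced_sat_off U w| <= #|forced_sat (U :\ w)|.
Proof.
move=> wU.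
have disj : [disjoint forced_sat U & forced_sat_off U w].
  rewrite disjoint_subset; apply/subsetP => f.
  rewrite in_forced_sat !inE => /andP[_ /forall_inP f_U].
  by rewrite f_U // andbF.
rewrite -cardsUI (disjoint_setI0 disj) cards0 addn0; apply: subset_leq_card.
rewrite subUset forced_satS ?subD1set //=.
by apply/subsetP => g; rewrite inE => /andP[].
Qed.

Hypothesis e_simple : simple_graph e.

Definition release (w : T) (f : {ffun T -> bool}) : {ffun T -> bool} :=
  [ffun x => if x == w then false else e w x || f x].

Lemma sat_release w f : sat_phi e f -> sat_phi e (release w f).
Proof.
have [e_sym e_irr] := e_simple.
move=> /forallP f_sat; apply/forallP => u; apply/forallP => v.
apply/implyP => euv; rewrite !ffunE.
have [uw|uw] := eqVneq u w; have [vw|vw] := eqVneq v w.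
- by move: euv; rewrite uw vw e_irr.
- by rewrite -uw euv.
- by rewrite -vw e_sym euv.
- by case/orP: (implyP (forallP (f_sat u) v) euv) => ->; rewrite !orbT.
Qed.

Lemma release_forced (U : {set T}) w f :
  f \in forced_sat U -> release w f \in forced_sat_off U w.
Proof.
rewrite in_forced_sat => /andP[f_sat /forall_inP f_U].
rewrite inE ffunE eqxx andbT in_forced_sat sat_release //=.
apply/forall_inP => u; rewrite !inE ffunE.
by case/andP=> /negbTE -> uU; rewrite f_U ?orbT.
Qed.

(* f is recovered from its release and its values at the neighbours of w,
   since f w is true. *)
Lemma card_forced_sat_le_off (U : {set T}) w : w \in U ->
  #|forced_sat U| <= #|forced_sat_off U w| * 2 ^ #|[set v | e w v]|.
Proof.
move=> wU.
pose F f : {ffun T -> bool} * {ffun {x | e w x} -> bool} :=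
  (release w f, [ffun x => f (val x)]).
have F_inj : {in forced_sat U &, injective F}.
  move=> f1 f2; rewrite !in_forced_sat => /andP[_ /forall_inP f1_U].
  move=> /andP[_ /forall_inP f2_U] [/ffunP E1 /ffunP E2]; apply/ffunP => x.
  have [->|xw] := eqVneq x w; first by rewrite f1_U ?f2_U.
  case wx: (e w x); first by have := E2 (exist _ x wx); rewrite !ffunE.
  by have := E1 x; rewrite !ffunE (negbTE xw) wx.
rewrite -(card_in_imset F_inj).
have sub_F : F @: forced_sat U \subset
    setX (forced_sat_off U w) [set: {ffun {x | e w x} -> bool}].
  apply/subsetP => _ /imsetP[f fU ->].
  by rewrite in_setX in_setT andbT release_forced.
rewrite (leq_trans (subset_leq_card sub_F)) //.
rewrite cardsX cardsT card_ffun card_bool card_sig.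
by rewrite -[#|[pred x | e w x]|]cardsE.
Qed.

Lemma forced_sat_step d (U : {set T}) w : max_degree_le e d -> w \in U ->
  (2 ^ d).+1 * #|forced_sat U| <= 2 ^ d * #|forced_sat (U :\ w)|.
Proof.
move=> e_deg wU.
have le_off : #|forced_sat U| <= #|forced_sat_off U w| * 2 ^ d.
  apply: leq_trans (card_forced_sat_le_off wU) _.
  by rewrite leq_mul2l leq_exp2l ?e_deg ?orbT.
rewrite mulSn.
apply: leq_trans (leq_mul (leqnn _) (card_forced_sat_add_off wU)).
by rewrite mulnDr addnC leq_add2l mulnC.
Qed.

Lemma forced_sat_decay d (U : {set T}) : max_degree_le e d ->
  (2 ^ d).+1 ^ #|U| * #|forced_sat U| <= (2 ^ d) ^ #|U| * count_phi e.
Proof.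
move=> e_deg; have [n cardU] : {n | #|U| = n} by exists #|U|.
elim: n U cardU => [|n IH] U cardU.
  rewrite cardU !expn0 !mul1n (cards0_eq cardU) -card_forced_sat0.
  by apply/subset_leq_card/forced_satS/sub0set.
have [w wU] : {w | w \in U} by apply/sigW/card_gt0P; rewrite cardU.
have cardUw : #|U :\ w| = n by move: cardU; rewrite (cardsD1 w U) wU => -[].
rewrite cardU !expnS -!mulnA mulnCA.
apply: leq_trans (leq_mul (leqnn _) (forced_sat_step e_deg wU)) _.
by rewrite mulnCA leq_mul2l -cardUw IH ?orbT.
Qed.

End ForcedAssignments.

Lemma INR_expn m n : INR (m ^ n) = (INR m ^ n)%R.
Proof. by elim: n => [|n IH] //; rewrite expnS -multE mult_INR IH. Qed.

Section RealBounds.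
Local Open Scope R_scope.

Lemma Rlt_div_r a b c : 0 < c -> a * c < b -> a < b / c.
Proof.
move=> c_gt0 lt_acb; apply: (Rmult_lt_reg_r c) => //.
by rewrite /Rdiv Rmult_assoc Rinv_l; lra.
Qed.

Lemma Rlt_div_l a b c : 0 < c -> a < b * c -> a / c < b.
Proof.
move=> c_gt0 lt_abc; apply: (Rmult_lt_reg_r c) => //.
by rewrite /Rdiv Rmult_assoc Rinv_l; lra.
Qed.

Lemma Rpower2_div_ln_ratio q n : 1 < q ->
  Rpower 2 (INR n / (ln 2 / ln q)) = q ^ n.
Proof.
move=> q_gt1.
have ln_q : ln q <> 0 by apply: ln_neq_0; lra.
have ln_2 : ln 2 <> 0 by apply: ln_neq_0; lra.
rewrite -Rpower_pow; last lra.
by rewrite /Rpower; congr exp; field.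
Qed.

Lemma le_div_pow_succ_ratio (D a c : R) n : 0 < D ->
  (D + 1) ^ n * a <= D ^ n * c -> a <= c / ((D + 1) / D) ^ n.
Proof.
move=> D_gt0 le_ac.
have Dn_gt0 : 0 < D ^ n by apply: pow_lt.
have D1n_gt0 : 0 < (D + 1) ^ n by apply: pow_lt; lra.
rewrite /Rdiv Rpow_mult_distr pow_inv.
apply: (Rmult_le_reg_l ((D + 1) ^ n)) => //.
by replace (_ * (c * _)) with (D ^ n * c) by (field; lra).
Qed.

End RealBounds.

Theorem theorem4 :
  forall d : nat, (1 <= d)%N ->
  exists b : R, (1 < b)%R /\
    forall (T : finType) (e : rel T),
      simple_graph e -> no_isolated e -> max_degree_le e d ->
      forall U : {set T},
        (INR (count_phi_set e U) <=
         INR (count_phi e) / Rpower 2 (INR #|U| / b))%R.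
Proof.
move=> d d_ge1.
set D := INR (2 ^ d); set q := ((D + 1) / D)%R.
have D_gt1 : (1 < D)%R.
  have /leP/le_INR : 2 <= 2 ^ d by rewrite -{1}(expn1 2) leq_exp2l.
  by rewrite /D /=; lra.
have q_gt1 : (1 < q)%R by apply: Rlt_div_r; lra.
have ln_q : (0 < ln q < ln 2)%R.
  rewrite -ln_1; split; apply: ln_increasing => //; try lra.
  by apply: Rlt_div_l; lra.
exists (ln 2 / ln q)%R; split; first by apply: Rlt_div_r; lra.
move=> T e e_simple _ e_deg U.
rewrite Rpower2_div_ln_ratio //; apply: le_div_pow_succ_ratio; first lra.
have /leP/le_INR := forced_sat_decay e_simple U e_deg.
by rewrite /D -!multE !mult_INR !INR_expn S_INR INR_expn.
Qed.
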